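(* Let $f:\mathbb{R}^n\to\mathbb{R}$ be a polynomial of degree $d$. Assume that $0$ is an isolated zero of $f$ (in particular $f(0)=0$) and that there is $\epsilon_0>0$ such that $\langle\nabla f(x),x\rangle\neq0$ for all $x\in B(0,\epsilon_0)\setminus\{0\}$. Then $|f(ux)|\leq|f(x)|$ for all $u\in[0,1]$ and all $x\in B(0,\epsilon_0)$. In particular, for every $t\geq0$ the sub-level set $\{x\in B(0,\epsilon_0): |f(x)|\leq t\}$ is star-shaped with respect to $0$.
   Context: $B(0,r)$ denotes the open Euclidean ball of radius $r$ centered at $0$, and $\langle\cdot,\cdot\rangle$ the Euclidean inner product. *)

From HB Require Import structures.
From mathcomp Require Import all_boot all_order all_algebra.
From mathcomp Require Import reals.
From mathcomp Require Export mpoly.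
Set Implicit Arguments. Unset Strict Implicit. Unset Printing Implicit Defensive.
Import Order.TTheory GRing.Theory Num.Theory.
Local Open Scope ring_scope.

Definition sqnorm (R : realType) (n : nat) (x : 'I_n -> R) : R :=
  \sum_(i < n) x i ^+ 2.

Definition inball0 (R : realType) (n : nat) (r : R) (x : 'I_n -> R) : Prop :=
  Num.sqrt (sqnorm x) < r.

Definition grad_dot (R : realType) (n : nat) (f : {mpoly R[n]}) (x : 'I_n -> R) : R :=
  \sum_(i < n) (mderiv i f).@[x] * x i.

Definition vscale (R : realType) (n : nat) (u : R) (x : 'I_n -> R) : 'I_n -> R :=
  fun i => u * x i.

Definition tdegree (R : realType) (n : nat) (f : {mpoly R[n]}) : nat := (msize f).-1.

From HB Require Import structures.
From mathcomp Require Import all_boot all_order all_algebra.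
From mathcomp Require Import reals.
From mathcomp Require Import mpoly.
From mathcomp Require Import polyrcf.
From mathcomp Require Import ring.
Import Order.TTheory GRing.Theory Num.Theory.
Local Open Scope ring_scope.

(* Fix x and restrict f to the ray through x: p(u) = f(u x) is a univariate
   polynomial with p(0) = f(0) = 0, and Euler's identity for monomials gives
   u p'(u) = <grad f(u x), u x>.  For x <> 0 in the ball the gradient
   condition makes p' root-free on ]0, 1], so p' has constant sign there, p is
   monotone on [0, 1], and |p(u)| <= |p(1)|. *)

Lemma abs_horner_le_deriv_noroot (R : rcfType) (p : {poly R}) (a b : R) :
  p.[a] = 0 -> {in `]a, b], forall c, p^`().[c] != 0} ->
  {in `[a, b], forall u, `|p.[u]| <= `|p.[b]|}.
Proof.
move=> pa0 noroot_dp u uab.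
have [ltab|leba] := ltP a b; last first.
  suff -> : u = b by [].
  by apply/le_anti; rewrite (itvP uab) (le_trans leba) ?(itvP uab).
have bab : b \in `]a, b] by rewrite in_itv /= ltab lexx.
wlog dpb_gt0 : p pa0 noroot_dp / 0 < p^`().[b].
  move=> wlog_p; have := noroot_dp b bab; rewrite neq_lt => /orP[dpb_lt0|].
  - rewrite -normrN -[X in _ <= X]normrN -!hornerN; apply: wlog_p.
    + by rewrite hornerN pa0 oppr0.
    + by move=> c /noroot_dp; rewrite derivN hornerN oppr_eq0.
    + by rewrite derivN hornerN oppr_gt0.
  - exact: wlog_p.
have dp_ge0 c : c \in `]a, b[ -> 0 <= p^`().[c].
  move=> cab; have sg_eq := polyrN0_itv noroot_dp bab (subset_itv_oo_oc cab).
  by apply: ltW; rewrite -sgr_cp0 sg_eq gtr0_sg.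
have mono := ler_hornerW dp_ge0.
have aab : a \in `[a, b] by rewrite in_itv /= lexx ltW.
have pu_ge0 : 0 <= p.[u] by rewrite -pa0 mono ?(itvP uab).
have pu_le : p.[u] <= p.[b] by rewrite mono ?(itvP uab) // in_itv /= ltW ?lexx.
by rewrite !ger0_norm ?(le_trans pu_ge0 pu_le).
Qed.

Lemma sum_mderivXE (R : comNzRingType) (n : nat) (p : {mpoly R[n]}) :
  \sum_(i < n) mderiv i p * 'X_i =
  \sum_(m <- msupp p) (p@_m * (mdeg m)%:R) *: 'X_[m].
Proof.
under eq_bigr => i _ do rewrite {1}[p]mpolyE raddf_sum /= mulr_suml.
rewrite exchange_big /=; apply: eq_bigr => m _.
transitivity (\sum_(i < n) (p@_m * (m i)%:R) *: 'X_[m]).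
  apply: eq_bigr => i _; rewrite mderivZ mderivX -!scalerAl scalerA.
  have [->|mi_gt0] := posnP (m i); first by rewrite !mulr0 !scale0r.
  rewrite -mpolyXD submK //; apply/mnm_lepP => j; rewrite mnm1E.
  by case: eqP => [<-|].
by rewrite -scaler_suml -mulr_sumr -natr_sum mdegE.
Qed.

Section RadialRestriction.
Context {R : realType} {n : nat}.

Definition radial_poly (x : 'I_n -> R) (f : {mpoly R[n]}) : {poly R} :=
  \sum_(m <- msupp f) (f@_m * \prod_(i < n) x i ^+ m i) *: 'X^(mdeg m).

Lemma prod_vscaleX (u : R) (x : 'I_n -> R) (m : 'X_{1..n}) :
  \prod_(i < n) vscale u x i ^+ m i = u ^+ mdeg m * \prod_(i < n) x i ^+ m i.
Proof.
rewrite /vscale; under eq_bigr do rewrite exprMn.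
by rewrite big_split /= prodrXr mdegE.
Qed.

Lemma horner_radial_poly (x : 'I_n -> R) (f : {mpoly R[n]}) (u : R) :
  (radial_poly x f).[u] = f.@[vscale u x].
Proof.
rewrite horner_sum mevalE; apply: eq_bigr => m _.
by rewrite hornerZ hornerXn prod_vscaleX mulrAC mulrA.
Qed.

Lemma horner_deriv_radial_poly (x : 'I_n -> R) (f : {mpoly R[n]}) (u : R) :
  u * (radial_poly x f)^`().[u] = grad_dot f (vscale u x).
Proof.
transitivity ((\sum_(i < n) mderiv i f * 'X_i).@[vscale u x]); last first.
  rewrite /grad_dot raddf_sum /=; apply: eq_bigr => i _.
  by rewrite mevalM mevalXU.
rewrite sum_mderivXE raddf_sum /= horner_sum mulr_sumr raddf_sum /=.
apply: eq_bigr => m _.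
rewrite derivZ derivXn hornerZ hornerMn hornerXn mevalZ mevalX prod_vscaleX.
case: (mdeg m) => [|k]; first by rewrite !mulr0n !mulr0 !mul0r.
by rewrite -mulr_natr exprS /=; ring.
Qed.

Lemma inball0_vscale (r u : R) (x : 'I_n -> R) :
  0 <= u <= 1 -> inball0 r x -> inball0 r (vscale u x).
Proof.
move=> /andP[u_ge0 u_le1]; rewrite /inball0 /sqnorm /vscale => x_in.
under eq_bigr do rewrite exprMn.
rewrite -mulr_sumr sqrtrM ?sqr_ge0 // sqrtr_sqr ger0_norm //.
by apply: le_lt_trans x_in; rewrite ler_piMl ?sqrtr_ge0.
Qed.

Lemma abs_meval_vscale_le (f : {mpoly R[n]}) (eps : R) :
  f.@[fun _ => 0] = 0 ->
  (forall x, inball0 eps x -> x <> (fun _ => 0) -> grad_dot f x != 0) ->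
  forall u x, 0 <= u <= 1 -> inball0 eps x -> `|f.@[vscale u x]| <= `|f.@[x]|.
Proof.
move=> f0 grad_neq0 u x u01 x_in.
have [/forallP x0|/forallPn[j xj_neq0]] := boolP [forall i, x i == 0].
  by rewrite (@meval_eq _ _ _ x) // => i; rewrite /vscale (eqP (x0 i)) mulr0.
have -> : f.@[x] = (radial_poly x f).[1].
  by rewrite horner_radial_poly; apply: meval_eq => i; rewrite /vscale mul1r.
have u_in : u \in `[0, 1] by rewrite in_itv.
rewrite -horner_radial_poly; apply: abs_horner_le_deriv_noroot u_in.
  rewrite horner_radial_poly -[RHS]f0.
  by apply: meval_eq => i; rewrite /vscale mul0r.
move=> c /andP[/= c_gt0 c_le1]; apply: contra_neq (grad_neq0 (vscale c x) _ _).
- by rewrite -horner_deriv_radial_poly => ->; rewrite mulr0.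
- by apply: inball0_vscale => //; rewrite (ltW c_gt0).
- move=> /(congr1 (fun y => y j)); rewrite /vscale => /eqP.
  by rewrite mulf_eq0 gt_eqF //= (negPf xj_neq0).
Qed.

End RadialRestriction.

Theorem lemma3 (R : realType) (n d : nat) (f : {mpoly R[n]})
  (hdeg : tdegree f = d)
  (eps0 : R) (heps0 : 0 < eps0)
  (hf0 : f.@[fun _ => 0] = 0)
  (hiso : exists r : R, 0 < r /\
     forall x : 'I_n -> R, inball0 r x -> f.@[x] = 0 -> x = (fun _ => 0))
  (hgrad : forall x : 'I_n -> R, inball0 eps0 x -> x <> (fun _ => 0) ->
     grad_dot f x != 0) :
  (forall (u : R) (x : 'I_n -> R), 0 <= u <= 1 -> inball0 eps0 x ->
     `|f.@[vscale u x]| <= `|f.@[x]|)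
  /\
  (forall t : R, 0 <= t -> forall x : 'I_n -> R,
     inball0 eps0 x -> `|f.@[x]| <= t ->
     forall u : R, 0 <= u <= 1 ->
       inball0 eps0 (vscale u x) /\ `|f.@[vscale u x]| <= t).
Proof.
have abs_f_radial_le := abs_meval_vscale_le f eps0 hf0 hgrad.
split=> // t _ x x_in fx_le u u01; split; first exact: inball0_vscale.
exact: le_trans (abs_f_radial_le u x u01 x_in) fx_le.
Qed.
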